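(* Let $s\ge2$ be an integer. For every $C_1>0$ there exists $C_2>0$, and for every $C_2'>0$ there exists $C_1'>0$ (all depending only on $s$ and the given constant), such that for every integer $N\ge1$, every $\varepsilon>0$ and every $f\colon\mathbb{N}_0\to\mathbb{U}$: (i) if $\|f\|_{U^s[N]}\ge1-C_1\varepsilon$ then $\operatorname{Re} E_N(f)\ge 1-C_2\varepsilon$; (ii) if $\operatorname{Re}E_N(f)\ge1-C_2'\varepsilon$ then $\|f\|_{U^s[N]}\ge 1-C_1'\varepsilon$, where $$E_N(f)=\frac{1}{|D_N|}\sum_{\vec e\in D_N}\prod_{\omega\in\{0,1\}^s}\mathcal{C}^{|\omega|}f(e_0+\omega_1e_1+\dots+\omega_se_s),\qquad D_N=\Big\{\vec e=(e_0,\dots,e_s)\in[N]^{s+1}:\sum_{i=0}^se_i<N\Big\}.$$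
   Context: $\mathbb{U}=\{z\in\mathbb{C}:|z|=1\}$, $[N]=\{0,\dots,N-1\}$, $\mathcal{C}$ is complex conjugation, $|\omega|=\sum_i\omega_i$. Let $\Pi(N)$ be the set of $\vec n=(n_0,\dots,n_s)\in\mathbb{Z}^{s+1}$ with $n_0+\omega_1n_1+\dots+\omega_sn_s\in[N]$ for all $\omega\in\{0,1\}^s$; the Gowers norm is $\|f\|_{U^s[N]}\ge0$ with $\|f\|_{U^s[N]}^{2^s}=\frac{1}{|\Pi(N)|}\sum_{\vec n\in\Pi(N)}\prod_{\omega}\mathcal{C}^{|\omega|}f(n_0+\omega_1n_1+\dots+\omega_sn_s)$. *)

From HB Require Import structures.
From mathcomp Require Import all_boot all_order all_algebra.
From mathcomp Require Import reals complex.
Set Implicit Arguments. Unset Strict Implicit. Unset Printing Implicit Defensive.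
Import Order.TTheory GRing.Theory Num.Theory.
Local Open Scope ring_scope.

Definition wt (s : nat) (w : {ffun 'I_s -> bool}) : nat := \sum_(i < s) (w i : nat).

Definition conjit (R : realType) (k : nat) (z : R[i]) : R[i] := iter k (fun x => x^*) z.

(* Pi(N): vectors (n_0,...,n_s) in Z^{s+1}.  Since n_0 in [N] and n_0+n_i in [N],
   every coordinate lies in [-N, N); we encode n_i = k_i - N with k_i : 'I_(2N). *)
Definition zcoord (s N : nat) (k : {ffun 'I_s.+1 -> 'I_(2 * N)%N}) (i : 'I_s.+1) : int :=
  (k i)%:Z - N%:Z.

Definition cornerZ (s N : nat) (k : {ffun 'I_s.+1 -> 'I_(2 * N)%N}) (w : {ffun 'I_s -> bool}) : int :=
  zcoord k ord0 + \sum_(i < s) (w i : nat)%:Z * zcoord k (lift ord0 i).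

Definition inPi (s N : nat) (k : {ffun 'I_s.+1 -> 'I_(2 * N)%N}) : bool :=
  [forall w : {ffun 'I_s -> bool}, (0 <= cornerZ k w) && (cornerZ k w < N%:Z)].

Definition Pi_card (s N : nat) : nat := #|[pred k : {ffun 'I_s.+1 -> 'I_(2 * N)%N} | inPi k]|.

Definition gowers_pow (R : realType) (s N : nat) (f : nat -> R[i]) : R[i] :=
  (Pi_card s N)%:R^-1 *
  \sum_(k : {ffun 'I_s.+1 -> 'I_(2 * N)%N} | inPi k)
     \prod_(w : {ffun 'I_s -> bool}) conjit (wt w) (f `|cornerZ k w|%N).

Definition gowers (R : realType) (s N : nat) (f : nat -> R[i]) : R[i] :=
  (2 ^ s)%N.-root (gowers_pow s N f).

Definition inD (s N : nat) (e : {ffun 'I_s.+1 -> 'I_N}) : bool :=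
  (\sum_(i < s.+1) (e i : nat) < N)%N.

Definition cornerN (s N : nat) (e : {ffun 'I_s.+1 -> 'I_N}) (w : {ffun 'I_s -> bool}) : nat :=
  (e ord0 + \sum_(i < s) (w i : nat) * e (lift ord0 i))%N.

Definition EN (R : realType) (s N : nat) (f : nat -> R[i]) : R[i] :=
  (#|[pred e : {ffun 'I_s.+1 -> 'I_N} | inD e]|)%:R^-1 *
  \sum_(e : {ffun 'I_s.+1 -> 'I_N} | inD e)
     \prod_(w : {ffun 'I_s -> bool}) conjit (wt w) (f (cornerN e w)).

From HB Require Import structures.
From mathcomp Require Import all_boot all_order all_algebra.
From mathcomp Require Import reals complex.
From mathcomp Require Import zify ring lra.
Import Order.TTheory GRing.Theory Num.Theory.
Set Implicit Arguments. Unset Strict Implicit. Unset Printing Implicit Defensive.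
Local Open Scope ring_scope.

(* A point (n_0, ..., n_s) of Pi(N) spans a box whose vertices are the corners
   n_0 + w_1 n_1 + ... + w_s n_s.  Reflecting the box in every direction with
   n_i < 0 moves n_0 to its lowest vertex and yields a point of D_N whose cube
   product differs from the original one only by complex conjugation.  This
   folding is onto D_N and becomes injective once the sign pattern of the n_i
   is remembered, so the averages of 1 - Re (cube product) over Pi(N) and over
   D_N agree up to a factor 2^s.  Grouping the points of Pi(N) that differ only
   in n_0 and n_0 + n_s writes the Gowers sum as a sum of terms |sum_x g(x)|^2;
   hence ||f||^(2^s) is a nonnegative real, and Bernoulli's inequality moves
   bounds between it and its 2^s-th root. *)

Section Means.
Variable R : realFieldType.

Definition mean (T : finType) (P : pred T) (G : T -> R) : R :=
  #|P|%:R^-1 * \sum_(x | P x) G x.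

Lemma mean_le (T : finType) (P : pred T) (G : T -> R) (M : R) :
  0 <= M -> (forall x, P x -> G x <= M) -> mean P G <= M.
Proof.
move=> M0 GM; rewrite /mean; have [->|P0] := posnP #|P|; first by rewrite invr0 mul0r.
rewrite ler_pdivrMl ?ltr0n // -[#|P|]sum1_card natr_sum mulr_suml.
by apply: ler_sum => x Px; rewrite mul1r GM.
Qed.

Lemma one_sub_mean (T : finType) (P : pred T) (G : T -> R) :
  (0 < #|P|)%N -> 1 - mean P G = mean P (fun x => 1 - G x).
Proof.
move=> P0; rewrite /mean sumrB -[#|P|]sum1_card natr_sum mulrBr mulVf //.
by rewrite -natr_sum pnatr_eq0 -lt0n sum1_card.
Qed.

Lemma ler_sum_inj (A B : finType) (PA : pred A) (PB : pred B) (h : A -> B) (F : B -> R) :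
  {in PA &, injective h} -> (forall a, PA a -> PB (h a)) -> (forall b, PB b -> 0 <= F b) ->
  \sum_(a | PA a) F (h a) <= \sum_(b | PB b) F b.
Proof.
move=> h_inj hP F0; rewrite -[X in X <= _]/(\sum_(a in PA) F (h a)) -(big_imset _ h_inj).
rewrite [X in _ <= X](bigID (mem (h @: PA))) /=.
rewrite (eq_bigl (fun b => PB b && (b \in h @: PA))); last first.
  move=> b; apply/idP/andP => [|[]//] hb; split=> //.
  by case/imsetP: hb => a Pa ->; apply: hP.
by rewrite lerDl sumr_ge0 // => b /andP[/F0].
Qed.

Lemma ler_ratio (a b x y c1 c2 : R) : 0 < a -> 0 < b -> 0 <= c1 -> 0 <= y ->
  x <= c1 * y -> b <= c2 * a -> x / a <= c1 * c2 * (y / b).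
Proof.
move=> a0 b0 c10 y0 xy ba; rewrite mulrACA.
have aVb : a^-1 <= c2 / b by rewrite ler_pdivlMr // ler_pdivrMl // mulrC.
apply: (@le_trans _ _ (c1 * y / a)); first by rewrite ler_wpM2r // invr_ge0 ltW.
by rewrite ler_wpM2l ?mulr_ge0.
Qed.

End Means.

Section MeanComparison.
Variables (R : realFieldType) (A B T : finType) (PA : pred A) (PB : pred B).
Variables (phi : A -> B) (iota : B -> A) (tag : A -> T).
Hypotheses (phiP : forall a, PA a -> PB (phi a)) (iotaP : forall b, PB b -> PA (iota b)).
Hypotheses (iotaK : forall b, PB b -> phi (iota b) = b).
Hypothesis phi_tag_inj : {in PA &, injective (fun a => (phi a, tag a))}.
Section Sums.
Variable G : B -> R.
Hypothesis G_ge0 : forall b, PB b -> 0 <= G b.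

Lemma ler_sum_comp : \sum_(b | PB b) G b <= \sum_(a | PA a) G (phi a).
Proof.
rewrite [X in X <= _](eq_bigr (G \o phi \o iota)) => [|b /iotaK /= -> //].
apply: (ler_sum_inj (F := G \o phi)) => // [b b' Pb Pb' /(congr1 phi)|a /phiP /G_ge0 //].
by rewrite !iotaK.
Qed.

Lemma sum_comp_le : \sum_(a | PA a) G (phi a) <= (\sum_(b | PB b) G b) *+ #|T|.
Proof.
have -> : (\sum_(b | PB b) G b) *+ #|T| = \sum_(p : B * T | PB p.1) G p.1.
  rewrite -sumrMnl (eq_bigl (fun p : B * T => PB p.1 && predT p.2)) => [|p]; last by rewrite andbT.
  by rewrite -(pair_big PB predT (fun b _ => G b)); apply: eq_bigr => b _; rewrite sumr_const.
by apply: (ler_sum_inj (h := fun a => (phi a, tag a)) (F := G \o fst)) => // p /G_ge0.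
Qed.

End Sums.

Hypothesis PB_nonempty : (0 < #|PB|)%N.

Lemma card_PA_gt0 : (0 < #|PA|)%N.
Proof. by case/card_gt0P: PB_nonempty => b /iotaP Pa; apply/card_gt0P; exists (iota b). Qed.

Lemma card_comp_bounds : #|PB|%:R <= #|PA|%:R :> R /\ #|PA|%:R <= #|PB|%:R *+ #|T| :> R.
Proof.
rewrite -[#|PA|]sum1_card -[#|PB|]sum1_card !natr_sum.
by split; [apply: (ler_sum_comp (G := fun=> 1)) | apply: (sum_comp_le (G := fun=> 1))].
Qed.

Variable G : B -> R.
Hypothesis G_ge0 : forall b, PB b -> 0 <= G b.

Lemma mean_le_mean_comp : mean PB G <= #|T|%:R * mean PA (G \o phi).
Proof.
have [_ cardA] := card_comp_bounds.
rewrite /mean ![_^-1 * _]mulrC -[_%:R * _]mul1r mulrA.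
apply: ler_ratio; rewrite ?ltr0n ?card_PA_gt0 ?mul1r ?ler_sum_comp //.
- by rewrite sumr_ge0 // => a /phiP /G_ge0.
- by rewrite mulr_natl.
Qed.

Lemma mean_comp_le_mean : mean PA (G \o phi) <= #|T|%:R * mean PB G.
Proof.
have [cardB _] := card_comp_bounds.
rewrite /mean ![_^-1 * _]mulrC -[#|T|%:R]mulr1.
apply: ler_ratio; rewrite ?ltr0n ?card_PA_gt0 ?mul1r ?sumr_ge0 //.
by rewrite mulr_natl sum_comp_le.
Qed.

End MeanComparison.

Section ConjIter.
Variable R : realType.

Lemma conjitE n (z : R[i]) : conjit n z = if odd n then z^* else z.
Proof.
elim: n => [|n IH] //=; rewrite /conjit /= -/(conjit n z) IH.
by case: (odd n) => //=; rewrite conjCK.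
Qed.

Lemma normr_conjit n (z : R[i]) : `|conjit n z| = `|z|.
Proof. by rewrite conjitE; case: ifP => // _; rewrite norm_conjC. Qed.

Lemma Re_conjit n (z : R[i]) : complex.Re (conjit n z) = complex.Re z.
Proof. by rewrite conjitE; case: ifP => // _; case: z. Qed.

Lemma conjit_prod (I : finType) (P : pred I) n (F : I -> R[i]) :
  conjit n (\prod_(i | P i) F i) = \prod_(i | P i) conjit n (F i).
Proof.
rewrite conjitE; under [RHS]eq_bigr do rewrite conjitE.
by case: ifP => // _; rewrite rmorph_prod.
Qed.

Lemma Re_mean (T : finType) (P : pred T) (F : T -> R[i]) :
  complex.Re (#|P|%:R^-1 * \sum_(x | P x) F x) = mean P (fun x => complex.Re (F x)).
Proof.
rewrite /mean -raddf_sum /=; have -> : (#|P|%:R : R[i])^-1 = (#|P|%:R^-1)%:C%C.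
  by rewrite fmorphV rmorph_nat.
by case: (\sum_(x | P x) F x) => a b /=; ring.
Qed.

Lemma Re_norm1_bounds (z : R[i]) : `|z| = 1 -> -1 <= complex.Re z <= 1.
Proof. by move=> z1; have := normc_ge_Re z; rewrite z1 -[1]/(1%:C%C) lecR ler_norml. Qed.

End ConjIter.

Section CubeVertices.
Variable s : nat.
Local Notation W := {ffun 'I_s -> bool}.

Definition xorW (a b : W) : W := [ffun i => a i (+) b i].

Lemma xorWK (b : W) : involutive (xorW^~ b).
Proof. by move=> a; apply/ffunP => i; rewrite !ffunE addbK. Qed.

Lemma odd_wt_xorW (a b : W) : odd (wt (xorW a b)) = odd (wt a) (+) odd (wt b).
Proof.
rewrite /wt !(big_morph odd oddD (erefl (odd 0))) -big_split /=.
by apply: eq_bigr => i _; rewrite ffunE; case: (a i); case: (b i).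
Qed.

Lemma conjit_wt_xorW (R : realType) (a b : W) (z : R[i]) :
  conjit (wt (xorW a b)) z = conjit (wt b) (conjit (wt a) z).
Proof.
rewrite !conjitE odd_wt_xorW.
by case: (odd (wt a)); case: (odd (wt b)) => //=; rewrite conjCK.
Qed.

Definition unitW (i : 'I_s) : W := [ffun j => j == i].

Lemma wt_unitW i : wt (unitW i) = 1%N.
Proof.
rewrite /wt (bigD1 i) //= big1 => [|j ji]; first by rewrite ffunE eqxx.
by rewrite ffunE (negbTE ji).
Qed.

End CubeVertices.

Definition cubeZ (R : realType) (s N : nat) (f : nat -> R[i])
    (k : {ffun 'I_s.+1 -> 'I_(2 * N)}) : R[i] :=
  \prod_(w : {ffun 'I_s -> bool}) conjit (wt w) (f `|cornerZ k w|%N).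

Definition cubeN (R : realType) (s N : nat) (f : nat -> R[i])
    (e : {ffun 'I_s.+1 -> 'I_N}) : R[i] :=
  \prod_(w : {ffun 'I_s -> bool}) conjit (wt w) (f (cornerN e w)).

Lemma normr_cubeN (R : realType) (s N : nat) (f : nat -> R[i]) (e : {ffun 'I_s.+1 -> 'I_N}) :
  (forall n, `|f n| = 1) -> `|cubeN f e| = 1 :> R[i].
Proof. by move=> f1; rewrite normr_prod big1 // => w _; rewrite normr_conjit f1. Qed.

Lemma Posz_sum (I : finType) (P : pred I) (F : I -> nat) :
  ((\sum_(i | P i) F i)%N : int) = \sum_(i | P i) (F i : int).
Proof. exact: (big_morph Posz PoszD (erefl (Posz 0))). Qed.

Section Folding.
Variables s N' : nat.
Local Notation N := N'.+1.
Local Notation K := {ffun 'I_s.+1 -> 'I_(2 * N)}.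
Local Notation E := {ffun 'I_s.+1 -> 'I_N}.
Local Notation W := {ffun 'I_s -> bool}.

Lemma cornerZ_zero (k : K) : cornerZ k [ffun=> false] = zcoord k ord0.
Proof. by rewrite /cornerZ big1 ?addr0 // => i _; rewrite ffunE mul0r. Qed.

Lemma cornerZ_unitW (k : K) i :
  cornerZ k (unitW i) = zcoord k ord0 + zcoord k (lift ord0 i).
Proof.
rewrite /cornerZ (bigD1 i) //= big1 ?addr0 => [|j ji]; first by rewrite ffunE eqxx mul1r.
by rewrite ffunE (negbTE ji) mul0r.
Qed.

Lemma inPi_cornerZ (k : K) w : inPi k -> 0 <= cornerZ k w < N%:Z.
Proof. by move/forallP/(_ w). Qed.

Lemma inPi_zcoord0 (k : K) : inPi k -> 0 <= zcoord k ord0 < N%:Z.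
Proof. by move=> Pk; rewrite -cornerZ_zero inPi_cornerZ. Qed.

Lemma inPi_zcoordS (k : K) i : inPi k -> (`|zcoord k (lift ord0 i)|%N < N)%N.
Proof.
move=> Pk; have := inPi_zcoord0 Pk; have := inPi_cornerZ (unitW i) Pk.
rewrite cornerZ_unitW; lia.
Qed.

Lemma sum_cornerN (e : E) : (\sum_(j < s.+1) e j)%N = cornerN e [ffun=> true].
Proof.
rewrite big_ord_recl /cornerN; congr (_ + _)%N.
by apply: eq_bigr => i _; rewrite ffunE mul1n.
Qed.

Lemma cornerN_le_sum (e : E) w : (cornerN e w <= \sum_(j < s.+1) e j)%N.
Proof.
rewrite sum_cornerN /cornerN leq_add2l; apply: leq_sum => i _.
by rewrite ffunE mul1n; case: (w i); rewrite ?mul1n ?mul0n.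
Qed.

Definition sign_pattern (k : K) : W := [ffun i => zcoord k (lift ord0 i) < 0].

(* The [inord] casts are exact on Pi(N), where both values are below N. *)
Definition fold_Pi (k : K) : E :=
  [ffun j => inord (if j == ord0 then `|cornerZ k (sign_pattern k)|%N else `|zcoord k j|%N)].

Lemma fold_Pi0 (k : K) : inPi k -> (fold_Pi k ord0 : int) = cornerZ k (sign_pattern k).
Proof. by move=> Pk; rewrite ffunE eqxx inordK; have := inPi_cornerZ (sign_pattern k) Pk; lia. Qed.

Lemma fold_PiS (k : K) i : inPi k ->
  (fold_Pi k (lift ord0 i) : int) = `|zcoord k (lift ord0 i)|.
Proof.
move=> Pk; rewrite ffunE eq_sym (negbTE (neq_lift _ _)) inordK; first lia.
exact: inPi_zcoordS.
Qed.

Lemma cornerZ_fold (k : K) w : inPi k ->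
  cornerZ k w = cornerN (fold_Pi k) (xorW w (sign_pattern k)).
Proof.
move=> Pk; rewrite /cornerN PoszD fold_Pi0 // Posz_sum /cornerZ -[RHS]addrA.
congr (_ + _); rewrite -big_split /=; apply: eq_bigr => i _.
by rewrite PoszM fold_PiS // !ffunE; case: (w i); case: ltrP => /=; lia.
Qed.

Lemma cubeZ_fold (R : realType) (f : nat -> R[i]) (k : K) : inPi k ->
  cubeZ f k = conjit (wt (sign_pattern k)) (cubeN f (fold_Pi k)).
Proof.
move=> Pk; rewrite /cubeZ /cubeN conjit_prod.
rewrite (eq_bigr (fun w => conjit (wt w) (f (cornerN (fold_Pi k) (xorW w (sign_pattern k))))));
  last by move=> w _; rewrite cornerZ_fold.
rewrite [RHS](reindex_inj (can_inj (xorWK (sign_pattern k)))) /=.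
by apply: eq_bigr => w _; rewrite -conjit_wt_xorW xorWK.
Qed.

Lemma fold_inD (k : K) : inPi k -> inD (fold_Pi k).
Proof.
move=> Pk; rewrite /inD sum_cornerN.
have := inPi_cornerZ [ffun i => ~~ sign_pattern k i] Pk.
rewrite cornerZ_fold // (_ : xorW _ _ = [ffun=> true]); first lia.
by apply/ffunP => i; rewrite !ffunE addNb addbb.
Qed.

Lemma embed_D_subproof (x : 'I_N) : (x + N < 2 * N)%N.
Proof. by have := ltn_ord x; lia. Qed.

Definition embed_D (e : E) : K := [ffun j => Ordinal (embed_D_subproof (e j))].

Lemma zcoord_embed_D (e : E) j : zcoord (embed_D e) j = e j.
Proof. by rewrite /zcoord ffunE /=; lia. Qed.

Lemma cornerZ_embed_D (e : E) w : cornerZ (embed_D e) w = cornerN e w.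
Proof.
rewrite /cornerZ /cornerN PoszD Posz_sum zcoord_embed_D; congr (_ + _).
by apply: eq_bigr => i _; rewrite zcoord_embed_D PoszM.
Qed.

Lemma embed_D_inPi (e : E) : inD e -> inPi (embed_D e).
Proof.
rewrite /inD => De; apply/forallP => w; rewrite cornerZ_embed_D.
by have := cornerN_le_sum e w; lia.
Qed.

Lemma embed_DK (e : E) : inD e -> fold_Pi (embed_D e) = e.
Proof.
move=> De; have sign0 : sign_pattern (embed_D e) = [ffun=> false].
  by apply/ffunP => i; rewrite !ffunE zcoord_embed_D.
apply/ffunP => j; apply: val_inj; rewrite ffunE; case: eqP => [->|_] /=.
  by rewrite sign0 cornerZ_zero zcoord_embed_D /= inordK.
by rewrite zcoord_embed_D /= inordK.
Qed.

Lemma fold_sign_pattern_inj :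
  {in @inPi s N &, injective (fun k => (fold_Pi k, sign_pattern k))}.
Proof.
move=> k k' Pk Pk' [ek esign].
have eS (i : 'I_s) : zcoord k (lift ord0 i) = zcoord k' (lift ord0 i).
  have := fold_PiS i Pk; have := fold_PiS i Pk'; rewrite ek.
  have := congr1 (fun w : W => w i) esign; rewrite !ffunE.
  by case: ltrP; case: ltrP => //=; lia.
have e0 : zcoord k ord0 = zcoord k' ord0.
  have eSum : \sum_(i < s) (sign_pattern k' i : nat)%:Z * zcoord k (lift ord0 i) =
               \sum_(i < s) (sign_pattern k' i : nat)%:Z * zcoord k' (lift ord0 i).
    by apply: eq_bigr => i _; rewrite eS.
  have := fold_Pi0 Pk'; have := fold_Pi0 Pk; rewrite ek esign /cornerZ eSum; lia.
apply/ffunP => j; apply: val_inj; have : zcoord k j = zcoord k' j.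
  by case: (unliftP ord0 j) => [i ->|->].
by rewrite /zcoord => /addIr [].
Qed.

End Folding.

Section Positivity.
Variables (R : realType) (s' N' : nat) (f : nat -> R[i]).
Local Notation s := s'.+1.
Local Notation N := N'.+1.
Local Notation K := {ffun 'I_s.+1 -> 'I_(2 * N)}.
Local Notation W := {ffun 'I_s -> bool}.

Lemma with_ends_subproof (x y : 'I_N) : (y + N - x < 2 * N)%N.
Proof. by have := ltn_ord x; have := ltn_ord y; lia. Qed.

(* Coordinates are stored shifted by N: this sets n_0 := x and n_s := y - x,
   so that the last edge of the box runs from x to y. *)
Definition with_ends (p : K) (x y : 'I_N) : K :=
  [ffun j => if j == ord0 then Ordinal (embed_D_subproof x)
             else if j == ord_max then Ordinal (with_ends_subproof x y) else p j].

(* Two points of Pi(N) have the same frame iff they differ only in n_0 and n_s. *)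
Definition frame (k : K) : K := with_ends k ord0 ord0.

Definition ends (k : K) : 'I_N * 'I_N :=
  (inord (absz (zcoord k ord0)), inord (absz (zcoord k ord0 + zcoord k ord_max))).

Definition inner_offset (p : K) (w : W) : int :=
  \sum_(i < s | i != ord_max) (w i : nat)%:Z * zcoord p (lift ord0 i).

Definition admissible (p : K) (z : int) : bool :=
  [forall w : W, (0 <= z + inner_offset p w) && (z + inner_offset p w < N%:Z)].

Definition half_cube (p : K) (z : int) : R[i] :=
  \prod_(w : W | ~~ w ord_max) conjit (wt w) (f (absz (z + inner_offset p w))).

Lemma lift0_ord_max : lift ord0 ord_max = ord_max :> 'I_s.+1.
Proof. exact: val_inj. Qed.

Lemma inner_offset_eq p (w w' : W) :
  (forall i, i != ord_max -> w i = w' i) -> inner_offset p w = inner_offset p w'.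
Proof. by move=> ww'; apply: eq_bigr => i /ww' ->. Qed.

Lemma zcoord_with_ends0 p x y : zcoord (with_ends p x y) ord0 = x.
Proof. by rewrite /zcoord ffunE eqxx /=; lia. Qed.

Lemma zcoord_with_ends_max p x y : zcoord (with_ends p x y) ord_max = y%:Z - x%:Z.
Proof. by rewrite /zcoord ffunE /= eqxx /=; have := ltn_ord x; have := ltn_ord y; lia. Qed.

Lemma zcoord_with_endsS p x y i : i != ord_max ->
  zcoord (with_ends p x y) (lift ord0 i) = zcoord p (lift ord0 i).
Proof.
move=> i_max; rewrite /zcoord ffunE eq_sym (negbTE (neq_lift _ _)).
by rewrite -lift0_ord_max (inj_eq (@lift_inj _ ord0)) (negbTE i_max).
Qed.

Lemma cornerZ_with_ends p x y w :
  cornerZ (with_ends p x y) w = (if w ord_max then y%:Z else x%:Z) + inner_offset p w.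
Proof.
rewrite /cornerZ zcoord_with_ends0 (bigD1 ord_max) //= lift0_ord_max zcoord_with_ends_max.
rewrite (_ : \sum_(i < s | i != ord_max) _ = inner_offset p w); last first.
  by apply: eq_bigr => i /zcoord_with_endsS ->.
by case: (w ord_max) => /=; lia.
Qed.

Definition set_last (w : W) b : W := [ffun i => if i == ord_max then b else w i].

Lemma inPi_with_ends p x y : inPi (with_ends p x y) = admissible p x && admissible p y.
Proof.
have offset_set_last w b : inner_offset p (set_last w b) = inner_offset p w.
  by apply: inner_offset_eq => i /negbTE i_max; rewrite ffunE i_max.
apply/forallP/andP => [Pk|[/forallP Px /forallP Py] w].
  split; apply/forallP => w.
    by have := Pk (set_last w false); rewrite cornerZ_with_ends offset_set_last ffunE eqxx.
  by have := Pk (set_last w true); rewrite cornerZ_with_ends offset_set_last ffunE eqxx.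
by rewrite cornerZ_with_ends; case: (w ord_max); [apply: Py | apply: Px].
Qed.

Lemma cubeZ_with_ends p x y :
  cubeZ f (with_ends p x y) = half_cube p x * (half_cube p y)^*.
Proof.
rewrite /cubeZ (bigID (fun w : W => w ord_max)) /= mulrC; congr (_ * _).
  by apply: eq_bigr => w /negbTE w_max; rewrite cornerZ_with_ends w_max.
rewrite (reindex_inj (can_inj (xorWK (unitW ord_max)))) /= /half_cube rmorph_prod.
apply: eq_big => [w|w]; rewrite !ffunE eqxx addbT // => /negbTE w_max.
rewrite cornerZ_with_ends !ffunE eqxx addbT w_max /=.
rewrite (inner_offset_eq p (w' := w)) => [|i /negbTE i_max]; last by rewrite !ffunE i_max addbF.
by rewrite conjit_wt_xorW [conjit (wt (unitW _)) _]conjitE wt_unitW.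
Qed.

Lemma frame_with_ends p x y : frame (with_ends p x y) = frame p.
Proof. by apply/ffunP => j; rewrite !ffunE; case: (j =P ord0) => // _; case: (j =P ord_max). Qed.

Lemma ends_with_ends p x y : ends (with_ends p x y) = (x, y).
Proof.
rewrite /ends zcoord_with_ends0 zcoord_with_ends_max.
have := ltn_ord x; have := ltn_ord y => xN yN.
by congr (_, _); apply: val_inj => /=; rewrite inordK //; lia.
Qed.

Lemma with_ends_ends (k : K) : inPi k -> with_ends (frame k) (ends k).1 (ends k).2 = k.
Proof.
move=> Pk; have k0 := inPi_zcoord0 Pk.
have kmax : 0 <= zcoord k ord0 + zcoord k ord_max < N%:Z.
  by have := inPi_cornerZ (unitW ord_max) Pk; rewrite cornerZ_unitW lift0_ord_max.
apply/ffunP => j; apply: val_inj; rewrite !ffunE.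
case: eqP => [->|_] /=; first by rewrite inordK; move: k0; rewrite /zcoord; lia.
case: eqP => [->|_] //=; rewrite !inordK; move: k0 kmax; rewrite /zcoord; lia.
Qed.

Lemma sum_cubeZ_ge0 : 0 <= \sum_(k : K | inPi k) cubeZ f k.
Proof.
rewrite (partition_big frame predT) //=; apply: sumr_ge0 => p _.
rewrite (reindex_onto (fun q : 'I_N * 'I_N => with_ends p q.1 q.2) ends); last first.
  by move=> k /andP [Pk /eqP <-]; apply: with_ends_ends.
rewrite (eq_bigl (fun q : 'I_N * 'I_N =>
  (frame p == p) && (admissible p q.1 && admissible p q.2))); last first.
  by move=> [x y]; rewrite inPi_with_ends frame_with_ends ends_with_ends eqxx andbT andbC.
case: (frame p == p); last by rewrite big_pred0.
under eq_bigr do rewrite cubeZ_with_ends.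
rewrite -(pair_big (fun x : 'I_N => admissible p x) (fun y : 'I_N => admissible p y)
  (fun x y : 'I_N => half_cube p x * (half_cube p y)^*)) /=.
under eq_bigr do rewrite -big_distrr /=.
by rewrite -big_distrl -rmorph_sum mul_conjC_ge0.
Qed.

End Positivity.

Section Defects.
Variables (R : realType) (s N' : nat) (f : nat -> R[i]).
Hypothesis f_unit : forall n, `|f n| = 1.
Local Notation N := N'.+1.
Local Notation E := {ffun 'I_s.+1 -> 'I_N}.

Definition cube_defect (e : E) : R := 1 - complex.Re (cubeN f e).

Lemma cube_defect_ge0 e : 0 <= cube_defect e.
Proof. by rewrite subr_ge0; case/andP: (Re_norm1_bounds (normr_cubeN e f_unit)). Qed.

Lemma cube_defect_le2 e : cube_defect e <= 2.
Proof.
by rewrite /cube_defect; case/andP: (Re_norm1_bounds (normr_cubeN e f_unit)) => ? ?; lra.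
Qed.

Lemma inD_zero : inD ([ffun=> ord0] : E).
Proof. by rewrite /inD big1 // => i _; rewrite ffunE. Qed.

Lemma card_inD_gt0 : (0 < #|@inD s N|)%N.
Proof. by apply/card_gt0P; exists [ffun=> ord0]; apply: inD_zero. Qed.

Lemma card_inPi_gt0 : (0 < #|@inPi s N|)%N.
Proof. by apply/card_gt0P; exists (embed_D [ffun=> ord0]); apply/embed_D_inPi/inD_zero. Qed.

Lemma one_sub_Re_EN : 1 - complex.Re (EN s N f) = mean (@inD s N) cube_defect.
Proof. by rewrite /EN Re_mean one_sub_mean // card_inD_gt0. Qed.

Lemma one_sub_Re_gowers_pow :
  1 - complex.Re (gowers_pow s N f) = mean (@inPi s N) (cube_defect \o @fold_Pi s N').
Proof.
rewrite /gowers_pow /Pi_card Re_mean one_sub_mean ?card_inPi_gt0 //.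
congr (_ * _); apply: eq_bigr => k Pk.
rewrite /= /cube_defect -[complex.Re (cubeN _ _)](Re_conjit (wt (sign_pattern k))).
by rewrite -(cubeZ_fold f Pk).
Qed.

Lemma card_sign_patterns : #|{ffun 'I_s -> bool}| = (2 ^ s)%N.
Proof. by rewrite card_ffun card_bool card_ord. Qed.

Lemma one_sub_Re_EN_le :
  1 - complex.Re (EN s N f) <= (2 ^ s)%:R * (1 - complex.Re (gowers_pow s N f)).
Proof.
rewrite one_sub_Re_EN one_sub_Re_gowers_pow -card_sign_patterns.
apply: (mean_le_mean_comp (iota := @embed_D s N') (tag := @sign_pattern s N'));
  [exact: fold_inD | exact: embed_D_inPi | exact: embed_DK | exact: fold_sign_pattern_inj
  | exact: card_inD_gt0 | by move=> e _; apply: cube_defect_ge0].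
Qed.

Lemma one_sub_Re_gowers_pow_le :
  1 - complex.Re (gowers_pow s N f) <= (2 ^ s)%:R * (1 - complex.Re (EN s N f)).
Proof.
rewrite one_sub_Re_EN one_sub_Re_gowers_pow -card_sign_patterns.
apply: (mean_comp_le_mean (iota := @embed_D s N') (tag := @sign_pattern s N'));
  [exact: fold_inD | exact: embed_D_inPi | exact: embed_DK | exact: fold_sign_pattern_inj
  | exact: card_inD_gt0 | by move=> e _; apply: cube_defect_ge0].
Qed.

Lemma Re_EN_ge_m1 : -1 <= complex.Re (EN s N f).
Proof.
have : 1 - complex.Re (EN s N f) <= 2.
  by rewrite one_sub_Re_EN; apply: mean_le => // e _; apply: cube_defect_le2.
lra.
Qed.

End Defects.

Lemma bernoulli_le (R : realDomainType) (n : nat) (t : R) :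
  0 <= t -> 1 - t ^+ n <= n%:R * (1 - t).
Proof.
move=> t0; elim: n => [|n IH]; first by rewrite expr0 subrr mul0r.
have tIH : t * (1 - n%:R * (1 - t)) <= t * t ^+ n.
  by rewrite ler_wpM2l // lerBlDr addrC -lerBlDr.
have sq0 : 0 <= n%:R * ((1 - t) * (1 - t)) by rewrite mulr_ge0 ?sqr_ge0 ?ler0n // -expr2 sqr_ge0.
rewrite exprS -natr1; nra.
Qed.

Section GowersRoot.
Variables (R : realType) (s N : nat) (f : nat -> R[i]).

Lemma gowersXn : gowers s N f ^+ (2 ^ s) = gowers_pow s N f.
Proof. by rewrite rootCK // expn_gt0. Qed.

Lemma one_sub_Re_gowers_pow_le_of_gowers (t : R) : 0 <= t -> t%:C%C <= gowers s N f ->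
  1 - complex.Re (gowers_pow s N f) <= (2 ^ s)%:R * (1 - t).
Proof.
move=> t0 tG; have : (t ^+ (2 ^ s))%:C%C <= gowers_pow s N f.
  rewrite rmorphXn -gowersXn ler_pXn2r ?expn_gt0 // nnegrE ?ler0c //.
  by apply: le_trans tG; rewrite ler0c.
rewrite lecE => /andP[_ /= tXn].
by apply: le_trans (bernoulli_le (2 ^ s) t0); rewrite lerD2l lerN2.
Qed.

End GowersRoot.

Lemma gowers_pow_ge0 (R : realType) (s' N' : nat) (f : nat -> R[i]) :
  0 <= gowers_pow s'.+1 N'.+1 f.
Proof. by rewrite mulr_ge0 ?invr_ge0 ?ler0n ?sum_cubeZ_ge0. Qed.

Lemma gowers_ge_one_sub (R : realType) (s' N' : nat) (f : nat -> R[i]) (u : R) :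
  0 <= u -> 1 - complex.Re (gowers_pow s'.+1 N'.+1 f) <= u ->
  (1 - u)%:C%C <= gowers s'.+1 N'.+1 f.
Proof.
move=> u0; rewrite -gowersXn; set r := gowers _ _ f.
have r0 : 0 <= r by rewrite rootC_ge0 ?expn_gt0 ?gowers_pow_ge0.
have rRe : (complex.Re r)%:C%C = r by apply/RRe_real/ger0_real.
rewrite -rRe -rmorphXn lecR /=; move: r0; rewrite -rRe ler0c.
set rho := complex.Re r => rho0 defect_u.
have [rho1|rho1] := lerP 1 rho; first by apply: le_trans rho1; rewrite lerBlDr lerDl.
have rhoXn : rho ^+ (2 ^ s'.+1) <= rho by rewrite ler_iXnr ?expn_gt0 // ltW.
by apply: le_trans rhoXn; rewrite lerBlDr -lerBlDl.
Qed.

Theorem lemma3p2 (R : realType) (s : nat) (hs : (2 <= s)%N) :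
  (forall C1 : R, 0 < C1 -> exists C2 : R, 0 < C2 /\
     forall (N : nat) (eps : R) (f : nat -> R[i]),
       (1 <= N)%N -> 0 < eps -> (forall n, `|f n| = 1) ->
       (((1 - C1 * eps)%:C)%C <= gowers s N f) ->
       1 - C2 * eps <= complex.Re (EN s N f)) /\
  (forall C2' : R, 0 < C2' -> exists C1' : R, 0 < C1' /\
     forall (N : nat) (eps : R) (f : nat -> R[i]),
       (1 <= N)%N -> 0 < eps -> (forall n, `|f n| = 1) ->
       1 - C2' * eps <= complex.Re (EN s N f) ->
       (((1 - C1' * eps)%:C)%C <= gowers s N f)).
Proof.
case: s hs => [|s'] // _; set c : R := (2 ^ s'.+1)%:R.
have c_gt0 : 0 < c by rewrite ltr0n expn_gt0.
split=> [C1 C1_gt0 | C2' C2'_gt0].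
- (* The summand 2 * C1 covers the case C1 * eps > 1, where Re (EN s N f) >= -1 suffices. *)
  exists (c * c * C1 + 2 * C1); split=> [|[|N'] eps f // _ eps_gt0 f_unit t_le].
    by rewrite addr_gt0 ?mulr_gt0.
  have C1eps : 0 <= C1 * eps by rewrite mulr_ge0 ?ltW.
  have ccC1eps : 0 <= c * c * (C1 * eps) by rewrite !mulr_ge0 ?ltW.
  have [t_ge0|t_lt0] := lerP 0 (1 - C1 * eps); last first.
    by have := Re_EN_ge_m1 s'.+1 N' f_unit; lra.
  have := one_sub_Re_gowers_pow_le_of_gowers t_ge0 t_le.
  rewrite -(ler_pM2l c_gt0) => /(le_trans (one_sub_Re_EN_le s'.+1 N' f_unit)); lra.
- exists (c * C2'); split=> [|[|N'] eps f // _ eps_gt0 f_unit EN_ge].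
    exact: mulr_gt0.
  apply: gowers_ge_one_sub; first by rewrite ?mulr_ge0 ?ltW.
  apply: le_trans (one_sub_Re_gowers_pow_le s'.+1 N' f_unit) _.
  by rewrite -mulrA ler_pM2l //; lra.
Qed.
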